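(* Let $X$ be a finite connected poset and $\theta\in\mathcal{M}(X)$. Then $C\sim D$ implies $\theta(C)\sim\theta(D)$, so $\theta$ induces a map $\widetilde\theta$ on $\mathcal{C}(X)/{\sim}$ sending the class of $C$ to the class of $\theta(C)$, and $\widetilde\theta$ is a bijection. Moreover, if $\theta$ is increasing (resp. decreasing) on $C\in\mathcal{C}(X)$, then it is increasing (resp. decreasing) on every $D\in\mathcal{C}(X)$ with $D\sim C$.
   Context: $\mathcal{C}(X)$ is the set of maximal chains; $\mathrm{Min}(X)$, $\mathrm{Max}(X)$ the minimal and maximal elements. Two maximal chains are linked if they share an element lying in neither $\mathrm{Min}(X)$ nor $\mathrm{Max}(X)$; $\sim$ is the equivalence relation on $\mathcal{C}(X)$ generated by linkedness. For $x<y$, $e_{xy}$ denotes the incidence-algebra basis element and $B=\{e_{xy}:x<y\}$. For a bijection $\theta:B\to B$ and $C:u_1<\dots<u_m$ in $\mathcal{C}(X)$, $\theta$ is increasing on $C$ if there is $D:v_1<\dots<v_m$ in $\mathcal{C}(X)$ with $\theta(e_{u_iu_j})=e_{v_iv_j}$ for all $i<j$, decreasing if $\theta(e_{u_iu_j})=e_{v_{m-j+1}v_{m-i+1}}$ for all $i<j$; in either case write $\theta(C)=D$. $\mathcal{M}(X)$ is the set of bijections $B\to B$ increasing or decreasing on every maximal chain. *)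

From HB Require Import structures.
From mathcomp Require Import all_boot all_order all_fingroup.
From Stdlib Require Import Relations.Relation_Operators.
Set Implicit Arguments. Unset Strict Implicit. Unset Printing Implicit Defensive.
Import Order.Theory.
Local Open Scope order_scope.

Section Defs.
Context {d : Order.disp_t} {T : finPOrderType d}.

Definition poset_connected : Prop :=
  forall x y : T, clos_refl_sym_trans T (fun a b => a <= b) x y.

(* The basis B = { e_xy : x < y } of the (strict part of the) incidence algebra;
   e_xy is represented by the pair (x, y). *)
Definition Bpair := {p : T * T | p.1 < p.2}.

Definition is_chain (s : seq T) : Prop := sorted <%O s.

Definition maxchain (s : seq T) : Prop :=
  is_chain s /\ forall t, is_chain t -> {subset s <= t} -> {subset t <= s}.

Definition is_min (x : T) : Prop := forall y : T, ~ (y < x).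
Definition is_max (x : T) : Prop := forall y : T, ~ (x < y).

Definition linked (C D : seq T) : Prop :=
  maxchain C /\ maxchain D /\
  exists x, [/\ x \in C, x \in D, ~ is_min x & ~ is_max x].

Definition chain_equiv : seq T -> seq T -> Prop := clos_refl_sym_trans _ linked.

Definition incr_on (th : {perm Bpair}) (C D : seq T) : Prop :=
  maxchain D /\ size D = size C /\
  forall (i j : nat), (i < j < size C)%N ->
  forall b : Bpair, val b = (nth (val b).1 C i, nth (val b).1 C j) ->
    val (th b) = (nth (val b).1 D i, nth (val b).1 D j).

Definition decr_on (th : {perm Bpair}) (C D : seq T) : Prop :=
  maxchain D /\ size D = size C /\
  forall (i j : nat), (i < j < size C)%N ->
  forall b : Bpair, val b = (nth (val b).1 C i, nth (val b).1 C j) ->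
    val (th b) = (nth (val b).1 D (size C - 1 - j), nth (val b).1 D (size C - 1 - i)).

(* theta(C) = D *)
Definition maps_chain (th : {perm Bpair}) (C D : seq T) : Prop :=
  incr_on th C D \/ decr_on th C D.

Definition in_M (th : {perm Bpair}) : Prop :=
  forall C, maxchain C -> exists D, maps_chain th C D.

End Defs.

From mathcomp Require Import all_boot all_order all_fingroup zify.
From Stdlib Require Import Relations.Relation_Operators Relations.Operators_Properties.
From Stdlib Require Import Classical IndefiniteDescription.
Set Implicit Arguments. Unset Strict Implicit. Unset Printing Implicit Defensive.
Import Order.Theory.
Local Open Scope order_scope.

(* Let x be an interior point of a maximal chain E running from a to z.  Then
   theta(e_ax) and theta(e_xz) meet at an interior point y of theta(E); if theta is
   increasing on E then theta(e_ax) starts at a minimal element, if it is decreasing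
   then theta(e_ax) starts at y (and dually theta(e_xz) ends at a maximal element or
   at y).  If C and D are linked at x, the chain E following C below x and D above x
   is maximal, shares e_ax with C and e_xz with D, so theta has the same orientation
   on C, E and D, and theta(C), theta(D) both pass through the interior point y of
   theta(E).  Moreover theta(C) is unique (in a connected poset a one-point maximal
   chain is the whole poset) and theta^-1 maps theta(C) back to C, so C |-> theta(C)
   is an injection of the finite set of maximal chains into itself, hence onto;
   thus theta^-1 lies in M(X) as well, which gives injectivity of the induced map. *)

Lemma clos_rst_iff A (R : A -> A -> Prop) (P : A -> Prop) :
  (forall x y, R x y -> P x <-> P y) ->
  forall x y, clos_refl_sym_trans A R x y -> P x <-> P y.
Proof. by move=> hR x y; elim=> {x y}; try tauto; exact: hR. Qed.

Lemma fin_rel_surj (U : finType) (P : U -> Prop) (R : U -> U -> Prop) :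
  (forall a, P a -> exists2 b, P b & R a b) ->
  (forall a1 a2 b, P a1 -> P a2 -> R a1 b -> R a2 b -> a1 = a2) ->
  forall b, P b -> exists2 a, P a & R a b.
Proof.
move=> Rtot Rinj.
(* Extend R by the identity off P: this gives an injective, hence onto, self-map of U. *)
have [g gP] : exists g : U -> U,
    forall a, (P a -> P (g a) /\ R a (g a)) /\ (~ P a -> g a = a).
  apply: (functional_choice (fun a b => (P a -> P b /\ R a b) /\ (~ P a -> b = a))).
  move=> a; have [Pa|nPa] := classic (P a).
    by have [b Pb Rab] := Rtot a Pa; exists b.
  by exists a.
have g_inj : injective g.
  move=> a1 a2 eg; have [P1|nP1] := classic (P a1); have [P2|nP2] := classic (P a2).
  - apply: (Rinj _ _ (g a1) P1 P2); first exact: ((gP a1).1 P1).2.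
    by rewrite eg; exact: ((gP a2).1 P2).2.
  - by case: (nP2); rewrite -((gP a2).2 nP2) -eg; exact: ((gP a1).1 P1).1.
  - by case: (nP1); rewrite -((gP a1).2 nP1) eg; exact: ((gP a2).1 P2).1.
  - by rewrite -((gP a1).2 nP1) eg (gP a2).2.
move=> b Pb; have [g' _ g'K] := injF_bij g_inj.
have [Pa|nPa] := classic (P (g' b)).
  by exists (g' b) => //; rewrite -{2}(g'K b); exact: ((gP _).1 Pa).2.
by case: (nPa); rewrite -((gP _).2 nPa) g'K.
Qed.

Section MaximalChains.
Context {d : Order.disp_t} {T : finPOrderType d}.
Implicit Types (s C D : seq T) (a x y : T).

Definition interior_pt C x := [/\ x \in C, ~ is_min x & ~ is_max x].

Lemma chain_nth_lt s x0 i j : is_chain s -> (i < j < size s)%N ->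
  nth x0 s i < nth x0 s j.
Proof.
move=> hs /andP[ij js]; apply: (sorted_ltn_nth lt_trans) => //.
by rewrite inE (ltn_trans ij js).
Qed.

Lemma chain_nth_le s x0 i j : is_chain s -> (i <= j < size s)%N ->
  nth x0 s i <= nth x0 s j.
Proof.
move=> hs /andP[]; rewrite leq_eqVlt => /predU1P[-> //|ij js].
by rewrite ltW // chain_nth_lt ?ij.
Qed.

Lemma chain_comparable s : is_chain s -> {in s &, forall a b, a >=< b}.
Proof.
move=> hs a b aS bS; rewrite -(nth_index a aS) -(nth_index a bS).
have [ab|ba] := leqP (index a s) (index b s).
  by rewrite le_comparable // chain_nth_le ?ab ?index_mem.
by rewrite comparable_sym le_comparable // chain_nth_le ?(ltnW ba) ?index_mem.
Qed.

Lemma chain_cat_lt s1 s2 a b : is_chain (s1 ++ s2) -> a \in s1 -> b \in s2 -> a < b.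
Proof.
rewrite /is_chain (sorted_pairwise lt_trans) pairwise_cat => /and3P[+ _ _].
by move=> /allrelP; apply.
Qed.

Lemma chain_interior s x0 i : is_chain s -> (0 < i < (size s).-1)%N ->
  interior_pt s (nth x0 s i).
Proof.
move=> hs /andP[i0 il]; have iS : (i < size s)%N by lia.
split; first exact: mem_nth.
- by move/(_ (nth x0 s 0)); apply; rewrite chain_nth_lt ?i0.
- by move/(_ (nth x0 s (size s).-1)); apply; rewrite chain_nth_lt ?il //; lia.
Qed.

Lemma maxchain_mem C y : maxchain C -> {in C, forall c, y >=< c} -> y \in C.
Proof.
move=> [hC hmax] yC; apply/negPn/negP => yNC.
pose t := sort <=%O (y :: C).
have ht : is_chain t.
  rewrite /is_chain lt_sorted_uniq_le sort_uniq /= yNC (sorted_uniq lt_trans ltxx hC).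
  apply: (@sort_sorted_in _ (mem (y :: C))); last exact/allP.
  move=> a b; rewrite !inE => /predU1P[->|aC] /predU1P[->|bC].
  - by rewrite lexx.
  - exact: yC.
  - by rewrite orbC; apply: yC.
  - exact: (chain_comparable hC aC bC).
have /hmax : {subset C <= t} by move=> c cC; rewrite mem_sort inE cC orbT.
by move=> /(_ ht y); rewrite mem_sort inE eqxx (negbTE yNC) => /(_ isT).
Qed.

Lemma maxchain_nth0_min C x0 : maxchain C -> (0 < size C)%N -> is_min (nth x0 C 0).
Proof.
move=> hC C0 y y_lt.
have le0 c : c \in C -> nth x0 C 0 <= c.
  by move=> cC; rewrite -(nth_index x0 cC); apply: chain_nth_le hC.1 _; rewrite index_mem.
have yC : y \in C.
  by apply: maxchain_mem => // c /le0 /(lt_le_trans y_lt) /ltW /le_comparable.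
by have := lt_le_trans y_lt (le0 _ yC); rewrite ltxx.
Qed.

Lemma maxchain_last_max C x0 : maxchain C -> (0 < size C)%N ->
  is_max (nth x0 C (size C).-1).
Proof.
move=> hC C0 y lt_y.
have leL c : c \in C -> c <= nth x0 C (size C).-1.
  move=> cC; rewrite -(nth_index x0 cC); apply: chain_nth_le hC.1 _.
  have iC : (index c C < size C)%N by rewrite index_mem.
  lia.
have yC : y \in C.
  apply: maxchain_mem => // c /leL /le_lt_trans /(_ lt_y) /ltW /le_comparable.
  by rewrite comparable_sym.
by have := le_lt_trans (leL _ yC) lt_y; rewrite ltxx.
Qed.

Lemma chain_mid_lt s1 s2 x : is_chain (s1 ++ x :: s2) ->
  {in s1, forall a, a < x} /\ {in s2, forall b, x < b}.
Proof.
move=> hs; split=> [a aS|b bS]; first exact: chain_cat_lt hs aS (mem_head _ _).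
by rewrite -cat1s catA in hs; apply: chain_cat_lt hs _ bS; rewrite mem_cat mem_head orbT.
Qed.

Lemma maxchain_glue c1 c2 d1 d2 x : maxchain (c1 ++ x :: c2) ->
  maxchain (d1 ++ x :: d2) -> maxchain (c1 ++ x :: d2).
Proof.
move=> hC hD; have [c1_x x_c2] := chain_mid_lt hC.1; have [d1_x x_d2] := chain_mid_lt hD.1.
have hE : is_chain (c1 ++ x :: d2).
  move: hC.1 hD.1; rewrite /is_chain !(sorted_pairwise lt_trans) !pairwise_cat.
  case/and3P=> _ -> _; case/and3P=> _ _ ->; rewrite !andbT.
  apply/allrelP=> a b aS; rewrite inE => /predU1P[->|bS]; first exact: c1_x.
  exact: lt_trans (c1_x a aS) (x_d2 b bS).
split=> // t ht Et y yt.
have cmp_y c : c \in c1 ++ x :: d2 -> y >=< c.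
  by move=> cE; apply: (chain_comparable ht yt (Et c cE)).
have xE : x \in c1 ++ x :: d2 by rewrite mem_cat mem_head orbT.
rewrite mem_cat inE.
case/orP: (cmp_y x xE) => [y_x|x_y].
- have : y \in c1 ++ x :: c2.
    apply: maxchain_mem hC _ => c; rewrite mem_cat inE => /or3P[cS|/eqP->|cS].
    + by apply: cmp_y; rewrite mem_cat cS.
    + exact: le_comparable.
    + exact/le_comparable/ltW/(le_lt_trans y_x (x_c2 c cS)).
  rewrite mem_cat inE => /or3P[->//|->|yS]; first by rewrite orbT.
  by have := le_lt_trans y_x (x_c2 y yS); rewrite ltxx.
- have : y \in d1 ++ x :: d2.
    apply: maxchain_mem hD _ => c; rewrite mem_cat inE => /or3P[cS|/eqP->|cS].
    + by rewrite comparable_sym; apply/le_comparable/ltW/(lt_le_trans (d1_x c cS) x_y).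
    + by rewrite comparable_sym; apply: le_comparable.
    + by apply: cmp_y; rewrite mem_cat inE cS !orbT.
  rewrite mem_cat inE => /or3P[yS|->|->]; rewrite ?orbT //.
  by have := lt_le_trans (d1_x y yS) x_y; rewrite ltxx.
Qed.

Lemma maxchain_interior_nonempty c1 c2 x : maxchain (c1 ++ x :: c2) ->
  ~ is_min x -> ~ is_max x -> c1 != [::] /\ c2 != [::].
Proof.
move=> hC nmin nmax; split; apply/eqP=> c_nil; move: hC; rewrite c_nil.
- by move/(maxchain_nth0_min (x0 := x)) => /(_ isT).
- move/(maxchain_last_max (x0 := x)); rewrite nth_last last_cat /=.
  by rewrite size_cat addn1 => /(_ isT).
Qed.

Lemma connected_maxchain1_eq a : poset_connected (T := T) -> maxchain [:: a] ->
  forall b, b = a.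
Proof.
move=> hconn ha b.
have mem_a c : c >=< a -> c = a.
  move=> ca; apply/eqP; rewrite -mem_seq1.
  by apply: maxchain_mem => // ?; rewrite inE => /eqP->.
suff: b = a <-> a = a by case=> _ ->.
apply: (clos_rst_iff (P := eq^~ a)) (hconn b a) => u v uv.
split=> [ua|va]; apply: mem_a; first by rewrite comparable_sym -ua le_comparable.
by rewrite -va le_comparable.
Qed.

Lemma corner_nth E a c1 x c2 z : E = a :: c1 ++ x :: rcons c2 z ->
  [/\ size E = (size c1 + size c2).+3, nth x E 0 = a,
      nth x E (size c1).+1 = x & nth x E (size E).-1 = z].
Proof.
move=> ->; split=> //=; first by rewrite size_cat /= size_rcons; lia.
- by rewrite nth_cat ltnn subnn.
- by rewrite nth_last /= last_cat /= last_rcons.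
Qed.

Lemma eq_from_pairs s1 s2 x0 : size s1 = size s2 -> (1 < size s1)%N ->
  (forall i j, (i < j < size s1)%N ->
     (nth x0 s1 i, nth x0 s1 j) = (nth x0 s2 i, nth x0 s2 j)) ->
  s1 = s2.
Proof.
move=> s12 s1_gt1 h; apply: (eq_from_nth (x0 := x0) s12) => k kS.
have [->|k0] := posnP k; first by move: (h 0%N 1%N); rewrite s1_gt1 => /(_ isT) [].
by move: (h 0%N k); rewrite k0 kS => /(_ isT) [].
Qed.

Lemma chain_set_inj s1 s2 : is_chain s1 -> is_chain s2 ->
  [set x in s1] = [set x in s2] -> s1 = s2.
Proof.
move=> h1 h2 e; apply: (irr_sorted_eq lt_trans ltxx h1 h2) => x.
by have := congr1 (fun A : {set T} => x \in A) e; rewrite !inE.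
Qed.

Lemma linked_sym C D : linked C D -> linked D C.
Proof. by case=> hC [hD [x [xC xD nmin nmax]]]; do 2 split=> //; exists x. Qed.

End MaximalChains.

Section ChainImages.
Context {d : Order.disp_t} {T : finPOrderType d}.
Variable th : {perm (@Bpair d T)}.
Implicit Types (C D E : seq T) (b : @Bpair d T).

Lemma incr_onP C D x0 i j b : incr_on th C D -> (i < j < size C)%N ->
  val b = (nth x0 C i, nth x0 C j) -> val (th b) = (nth x0 D i, nth x0 D j).
Proof.
case=> _ [sDC hI] ijC; have [iC jC] : (i < size C)%N /\ (j < size C)%N by lia.
set y0 := (val b).1.
rewrite (set_nth_default y0 x0 iC) (set_nth_default y0 x0 jC) => /(hI _ _ ijC).
by rewrite (set_nth_default x0 y0 (n := i)) ?sDC // (set_nth_default x0 y0 (n := j)) ?sDC.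
Qed.

Lemma decr_onP C D x0 i j b : decr_on th C D -> (i < j < size C)%N ->
  val b = (nth x0 C i, nth x0 C j) ->
  val (th b) = (nth x0 D (size C - 1 - j), nth x0 D (size C - 1 - i)).
Proof.
case=> _ [sDC hI] ijC; have [iC jC] : (i < size C)%N /\ (j < size C)%N by lia.
set y0 := (val b).1.
rewrite (set_nth_default y0 x0 iC) (set_nth_default y0 x0 jC) => /(hI _ _ ijC).
by rewrite !(set_nth_default x0 y0 (s := D)) // sDC; lia.
Qed.

Lemma chain_bpair C x0 i j : is_chain C -> (i < j < size C)%N ->
  exists b : @Bpair d T, val b = (nth x0 C i, nth x0 C j).
Proof. by move=> hC ij; exists (exist _ (_, _) (chain_nth_lt x0 hC ij)). Qed.

Lemma incr_on_inv C D : maxchain C -> incr_on th C D -> incr_on th^-1 D C.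
Proof.
move=> hC hI; have [_ [sDC _]] := hI.
split=> //; split=> // i j ij b; move: (val b).1 => x0 eb; rewrite sDC in ij.
have [b0 eb0] := chain_bpair x0 hC.1 ij.
have <- : th b0 = b by apply: val_inj; rewrite (incr_onP hI ij eb0).
by rewrite permK.
Qed.

Lemma decr_on_inv C D : maxchain C -> decr_on th C D -> decr_on th^-1 D C.
Proof.
move=> hC hI; have [_ [sDC _]] := hI.
split=> //; split=> // i j ij b; move: (val b).1 => x0 eb; rewrite sDC in ij *.
have ij' : (size C - 1 - j < size C - 1 - i < size C)%N by lia.
have [b0 eb0] := chain_bpair x0 hC.1 ij'.
have <- : th b0 = b.
  apply: val_inj; rewrite (decr_onP hI ij' eb0) eb; congr (nth _ _ _, nth _ _ _); lia.
by rewrite permK.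
Qed.

Lemma maps_chain_inv C D : maxchain C -> maps_chain th C D -> maps_chain th^-1 D C.
Proof. by move=> hC [hI|hI]; [left; apply: incr_on_inv | right; apply: decr_on_inv]. Qed.

Lemma maps_chain_max C D : maps_chain th C D -> maxchain D.
Proof. by case=> -[]. Qed.

Lemma maps_chain_size C D : maps_chain th C D -> size D = size C.
Proof. by case=> -[_ []]. Qed.

Lemma incr_on_corner E E' a c1 x c2 z : E = a :: c1 ++ x :: rcons c2 z ->
  maxchain E -> incr_on th E E' ->
  exists2 y, interior_pt E' y &
    (forall b, val b = (a, x) -> is_min (val (th b)).1 /\ (val (th b)).2 = y) /\
    (forall b, val b = (x, z) -> (val (th b)).1 = y /\ is_max (val (th b)).2).
Proof.
move=> eE hE hI; have [hE' [sE _]] := hI; have [sE_i ea ex ez] := corner_nth eE.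
exists (nth x E' (size c1).+1); first by apply: chain_interior hE'.1 _; lia.
split=> b eb.
- have eb' : val b = (nth x E 0, nth x E (size c1).+1) by rewrite ea ex.
  rewrite (incr_onP hI _ eb'); last by lia.
  by split=> //; apply: maxchain_nth0_min hE' _; lia.
- have eb' : val b = (nth x E (size c1).+1, nth x E (size E).-1) by rewrite ex ez.
  rewrite (incr_onP hI _ eb'); last by lia.
  by rewrite -sE; split=> //; apply: maxchain_last_max hE' _; lia.
Qed.

Lemma decr_on_corner E E' a c1 x c2 z : E = a :: c1 ++ x :: rcons c2 z ->
  maxchain E -> decr_on th E E' ->
  exists2 y, interior_pt E' y &
    (forall b, val b = (a, x) -> (val (th b)).1 = y) /\
    (forall b, val b = (x, z) -> (val (th b)).2 = y).
Proof.
move=> eE hE hI; have [hE' [sE _]] := hI; have [sE_i ea ex ez] := corner_nth eE.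
exists (nth x E' (size E - 1 - (size c1).+1)); first by apply: chain_interior hE'.1 _; lia.
split=> b eb.
- have eb' : val b = (nth x E 0, nth x E (size c1).+1) by rewrite ea ex.
  by rewrite (decr_onP hI _ eb'); last by lia.
- have eb' : val b = (nth x E (size c1).+1, nth x E (size E).-1) by rewrite ex ez.
  by rewrite (decr_onP hI _ eb'); last by lia.
Qed.

Lemma incr_decr_lower_corner C E C' E' a c1 x c2 z e1 e2 w :
  C = a :: c1 ++ x :: rcons c2 z -> E = a :: e1 ++ x :: rcons e2 w ->
  maxchain C -> maxchain E -> incr_on th C C' -> decr_on th E E' -> False.
Proof.
move=> eC eE hC hE hI hD.
have ax : a < x.
  by move: hC.1; rewrite eC => /(chain_mid_lt (s1 := a :: c1)) [-> //]; rewrite mem_head.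
pose b : @Bpair d T := exist _ (a, x) ax.
have [? _ [/(_ b erefl) [min_b _] _]] := incr_on_corner eC hC hI.
have [y [_ nmin _] [/(_ b erefl) src_b _]] := decr_on_corner eE hE hD.
by case: nmin; rewrite -src_b.
Qed.

Lemma incr_decr_upper_corner C E C' E' a c1 x c2 z e0 e1 e2 :
  C = a :: c1 ++ x :: rcons c2 z -> E = e0 :: e1 ++ x :: rcons e2 z ->
  maxchain C -> maxchain E -> incr_on th C C' -> decr_on th E E' -> False.
Proof.
move=> eC eE hC hE hI hD.
have xz : x < z.
  move: hC.1; rewrite eC => /(chain_mid_lt (s1 := a :: c1)) [_ ->] //.
  by rewrite mem_rcons mem_head.
pose b : @Bpair d T := exist _ (x, z) xz.
have [? _ [_ /(_ b erefl) [_ max_b]]] := incr_on_corner eC hC hI.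
have [y [_ _ nmax] [_ /(_ b erefl) tgt_b]] := decr_on_corner eE hE hD.
by case: nmax; rewrite -tgt_b.
Qed.

Lemma incr_on_uniq C D1 D2 : is_chain C -> (1 < size C)%N ->
  incr_on th C D1 -> incr_on th C D2 -> D1 = D2.
Proof.
move=> hC C_gt1 h1 h2; have [_ [s1 _]] := h1; have [_ [s2 _]] := h2.
have x0 : T by case: C C_gt1 {hC h1 h2 s1 s2} => // x.
apply: (eq_from_pairs (x0 := x0)); rewrite ?s1 ?s2 // => i j ij.
have [b eb] := chain_bpair x0 hC ij.
by rewrite -(incr_onP h1 ij eb) -(incr_onP h2 ij eb).
Qed.

Lemma decr_on_uniq C D1 D2 : is_chain C -> (1 < size C)%N ->
  decr_on th C D1 -> decr_on th C D2 -> D1 = D2.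
Proof.
move=> hC C_gt1 h1 h2; have [_ [s1 _]] := h1; have [_ [s2 _]] := h2.
have x0 : T by case: C C_gt1 {hC h1 h2 s1 s2} => // x.
apply: (eq_from_pairs (x0 := x0)); rewrite ?s1 ?s2 // => i j ij.
have ij' : (size C - 1 - j < size C - 1 - i < size C)%N by lia.
have [b eb] := chain_bpair x0 hC ij'.
have [ei ej] : (size C - 1 - (size C - 1 - i) = i /\ size C - 1 - (size C - 1 - j) = j)%N.
  by lia.
by move: (decr_onP h1 ij' eb); rewrite (decr_onP h2 ij' eb) ei ej => -[-> ->].
Qed.

Lemma incr_decr_on_eq C D1 D2 : maxchain C -> (1 < size C)%N ->
  incr_on th C D1 -> decr_on th C D2 -> D1 = D2.
Proof.
move=> hC C_gt1 h1 h2; have [_ [s1 _]] := h1; have [_ [s2 _]] := h2.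
have [C_gt2|C2] : (2 < size C)%N \/ size C = 2 by lia.
  have [a [x [c2 [z eC]]]] : exists a x c2 z, C = a :: [::] ++ x :: rcons c2 z.
    case: C C_gt2 {C_gt1 hC h1 h2 s1 s2} => [|a [|x [|y r]]] // _.
    by exists a, x, (belast y r), (last y r); rewrite -lastI.
  by case: (incr_decr_lower_corner eC eC hC hC h1 h2).
have x0 : T by case: C C_gt1 {hC h1 h2 s1 s2 C2} => // x.
apply: (eq_from_pairs (x0 := x0)); rewrite ?s1 ?s2 // => i j ij.
have [b eb] := chain_bpair x0 hC.1 ij.
by rewrite -(incr_onP h1 ij eb) (decr_onP h2 ij eb) C2; congr (nth _ _ _, nth _ _ _); lia.
Qed.

Hypothesis hconn : poset_connected (T := T).

Lemma maps_chain_uniq C D1 D2 : maxchain C ->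
  maps_chain th C D1 -> maps_chain th C D2 -> D1 = D2.
Proof.
move=> hC m1 m2; have [C_gt1|C_le1] := ltnP 1 (size C).
  case: m1 m2 => h1 [] h2.
  - exact: incr_on_uniq hC.1 C_gt1 h1 h2.
  - exact: incr_decr_on_eq hC C_gt1 h1 h2.
  - exact/esym/(incr_decr_on_eq hC C_gt1 h2 h1).
  - exact: decr_on_uniq hC.1 C_gt1 h1 h2.
move: (maps_chain_size m1) (maps_chain_size m2) (maps_chain_max m1) (maps_chain_max m2).
clear m1 m2.
case: (size C) C_le1 => [|[|//]] _; first by move=> /size0nil-> /size0nil->.
case: D1 => [|a [|//]] //; case: D2 => [|b [|//]] // _ _ ha hb.
by rewrite (connected_maxchain1_eq hconn ha b).
Qed.

End ChainImages.

Section ChainClasses.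
Context {d : Order.disp_t} {T : finPOrderType d}.
Variable th : {perm (@Bpair d T)}.
Hypothesis hconn : poset_connected (T := T).
Implicit Types (C D E : seq T).

Lemma maps_chain_inj C1 C2 D : maxchain C1 -> maxchain C2 ->
  maps_chain th C1 D -> maps_chain th C2 D -> C1 = C2.
Proof.
move=> h1 h2 m1 m2.
exact: (maps_chain_uniq hconn (maps_chain_max m1)
  (maps_chain_inv h1 m1) (maps_chain_inv h2 m2)).
Qed.

Hypothesis hM : in_M th.

Lemma linked_maps_chain C D C' D' : linked C D ->
  maps_chain th C C' -> maps_chain th D D' ->
  [/\ linked C' D', incr_on th C C' -> incr_on th D D'
    & decr_on th C C' -> decr_on th D D'].
Proof.
case=> hC [hD [x [xC xD nmin nmax]]] mC mD.
case/splitPr: xC hC mC => c1 c2 hC mC; case/splitPr: xD hD mD => d1 d2 hD mD.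
have hE := maxchain_glue hC hD.
have [c1N c2N] := maxchain_interior_nonempty hC nmin nmax.
have [d1N d2N] := maxchain_interior_nonempty hD nmin nmax.
case: c1 c1N hC hE mC => [//|a c1] _ hC hE mC.
case/lastP: c2 c2N hC mC => [//|c2 z] _ hC mC.
case: d1 d1N hD mD => [//|a' d1] _ hD mD.
case/lastP: d2 d2N hD hE mD => [//|d2 w] _ hD hE mD.
clear D; set D := (a' :: d1) ++ x :: rcons d2 w.
(* E shares the basis element e_ax with C and e_xw with D. *)
set E := (a :: c1) ++ x :: rcons d2 w in hE.
have [E' mE] := hM hE.
have [a_x x_w] := chain_mid_lt hE.1.
have ax : a < x by rewrite a_x ?mem_head.
have xw : x < w by rewrite x_w ?mem_rcons ?mem_head.
pose eax : @Bpair d T := exist _ (a, x) ax.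
pose exw : @Bpair d T := exist _ (x, w) xw.
case: mC => hIC.
- have hIE : incr_on th E E'.
    by case: mE => [|hDE] //; case: (incr_decr_lower_corner erefl erefl hC hE hIC hDE).
  have hID : incr_on th D D'.
    by case: mD => [|hDD] //; case: (incr_decr_upper_corner erefl erefl hE hD hIE hDD).
  have [yC [yC' ymin ymax] [/(_ eax erefl) [_ eaxC] _]] := incr_on_corner erefl hC hIC.
  have [yE _ [/(_ eax erefl) [_ eaxE] /(_ exw erefl) [exwE _]]] := incr_on_corner erefl hE hIE.
  have [yD [yD' _ _] [_ /(_ exw erefl) [exwD _]]] := incr_on_corner erefl hD hID.
  split=> // [|/(incr_decr_lower_corner erefl erefl hC hC hIC) //].
  split; first exact: hIC.1; split; first exact: hID.1.
  by exists yC; split=> //; rewrite -eaxC eaxE -exwE exwD.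
- have hDE : decr_on th E E'.
    by case: mE => [hIE|] //; case: (incr_decr_lower_corner erefl erefl hE hC hIE hIC).
  have hDD : decr_on th D D'.
    by case: mD => [hID|] //; case: (incr_decr_upper_corner erefl erefl hD hE hID hDE).
  have [yC [yC' ymin ymax] [/(_ eax erefl) eaxC _]] := decr_on_corner erefl hC hIC.
  have [yE _ [/(_ eax erefl) eaxE /(_ exw erefl) exwE]] := decr_on_corner erefl hE hDE.
  have [yD [yD' _ _] [_ /(_ exw erefl) exwD]] := decr_on_corner erefl hD hDD.
  split=> // [|/(incr_decr_lower_corner erefl erefl hC hC)/(_ hIC) //].
  split; first exact: hIC.1; split; first exact: hDD.1.
  by exists yC; split=> //; rewrite -eaxC eaxE -exwE exwD.
Qed.

Lemma chain_equiv_maps C D C' D' : maxchain C -> chain_equiv C D ->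
  maps_chain th C C' -> maps_chain th D D' -> chain_equiv C' D'.
Proof.
move=> hC /clos_rst_rst1n_iff hCD.
elim: hCD C' hC => {C D} [C|C E D hCE _ IH] C' hC mC mD.
  by rewrite (maps_chain_uniq hconn hC mC mD); apply: rst_refl.
have hE : maxchain E by case: hCE => [[_ []]|[]].
have [E' mE] := hM hE.
apply: rst_trans (IH _ hE mE mD).
case: hCE => hCE; [apply: rst_step | apply: rst_sym; apply: rst_step].
- by have [] := linked_maps_chain hCE mC mE.
- by have [] := linked_maps_chain hCE mE mC.
Qed.

Lemma chain_equiv_orientation C D : chain_equiv C D ->
  ((exists C', incr_on th C C') <-> exists D', incr_on th D D') /\
  ((exists C', decr_on th C C') <-> exists D', decr_on th D D').
Proof.
have step C1 C2 : linked C1 C2 ->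
    ((exists C', incr_on th C1 C') -> exists D', incr_on th C2 D') /\
    ((exists C', decr_on th C1 C') -> exists D', decr_on th C2 D').
  move=> h12; have [D' mD] := hM h12.2.1.
  split=> -[C' hC']; exists D'.
  - by have [_ + _] := linked_maps_chain h12 (or_introl hC') mD; apply.
  - by have [_ _] := linked_maps_chain h12 (or_intror hC') mD; apply.
move=> hCD; split.
- apply: (clos_rst_iff (P := fun K => exists K', incr_on th K K')) hCD => C1 C2 h12.
  by split; [exact: (step _ _ h12).1 | exact: (step _ _ (linked_sym h12)).1].
- apply: (clos_rst_iff (P := fun K => exists K', decr_on th K K')) hCD => C1 C2 h12.
  by split; [exact: (step _ _ h12).2 | exact: (step _ _ (linked_sym h12)).2].
Qed.

Lemma maps_chain_surj D' : maxchain D' -> exists2 C, maxchain C & maps_chain th C D'.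
Proof.
move=> hD'.
(* A chain is determined by its set of elements, which lives in a finite type. *)
pose P (A : {set T}) := exists2 C, maxchain C & A = [set x in C].
pose R (A B : {set T}) := exists C D,
  [/\ maxchain C, maps_chain th C D, A = [set x in C] & B = [set x in D]].
have [_ _ [C [D [hC mCD _ eD]]]] : exists2 A, P A & R A [set x in D'].
  apply: fin_rel_surj; last by exists D'.
  - move=> _ [C hC ->]; have [D mCD] := hM hC.
    by exists [set x in D]; [exists D; first exact: maps_chain_max mCD | exists C, D].
  - move=> _ _ _ _ _ [C1 [D1 [hC1 m1 -> ->]]] [C2 [D2 [hC2 m2 -> eD]]].
    have eD12 : D1 = D2.
      by apply: chain_set_inj eD; [case: (maps_chain_max m1) | case: (maps_chain_max m2)].
    by rewrite eD12 in m1; rewrite (maps_chain_inj hC1 hC2 m1 m2).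
exists C => //; suff -> : D' = D by [].
by apply: chain_set_inj eD; [case: hD' | case: (maps_chain_max mCD)].
Qed.

Lemma in_M_inv : in_M th^-1.
Proof.
move=> D hD; have [C hC mCD] := maps_chain_surj hD.
by exists C; apply: maps_chain_inv hC mCD.
Qed.

End ChainClasses.

Theorem lemma3p7 (d : Order.disp_t) (T : finPOrderType d)
  (hconn : @poset_connected d T) (th : {perm (@Bpair d T)}) (hM : in_M th) :
  (* C ~ D implies theta(C) ~ theta(D)  (so theta~ is well defined) *)
  (forall C D C' D' : seq T, maxchain C -> maxchain D ->
     chain_equiv C D -> maps_chain th C C' -> maps_chain th D D' ->
     chain_equiv C' D') /\
  (* theta~ is injective on C(X)/~ *)
  (forall C D C' D' : seq T, maxchain C -> maxchain D ->
     maps_chain th C C' -> maps_chain th D D' -> chain_equiv C' D' ->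
     chain_equiv C D) /\
  (* theta~ is surjective on C(X)/~ *)
  (forall D' : seq T, maxchain D' ->
     exists C C' : seq T, [/\ maxchain C, maps_chain th C C' & chain_equiv C' D']) /\
  (* increasing / decreasing is constant on ~-classes *)
  (forall C D : seq T, maxchain C -> maxchain D -> chain_equiv C D ->
     ((exists C', incr_on th C C') -> exists D', incr_on th D D') /\
     ((exists C', decr_on th C C') -> exists D', decr_on th D D')).
Proof.
have hM' := in_M_inv hconn hM.
split; [|split; [|split]].
- by move=> C D C' D' hC _; apply: chain_equiv_maps.
- move=> C D C' D' hC hD mC mD hCD'.
  exact: (chain_equiv_maps hconn hM' (maps_chain_max mC) hCD'
    (maps_chain_inv hC mC) (maps_chain_inv hD mD)).
- move=> D' hD'; have [C hC mC] := maps_chain_surj hconn hM hD'.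
  by exists C, D'; split=> //; apply: rst_refl.
- move=> C D _ _ /(chain_equiv_orientation hM) [[incrCD _] [decrCD _]].
  by split.
Qed.
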